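(* For every $n\ge0$ there exists a bijection between the set of relaxed binary trees of size $n$ and the set $\mathcal{D}_n$ of horizontally decorated Dyck paths of length $2n$.
   Context: A (rooted, plane) binary tree is either a leaf or an internal node with an ordered pair of binary subtrees; its size is its number of internal nodes; postorder visits left subtree, right subtree, then root. A relaxed binary tree of size $n$ is obtained from a binary tree $T$ with $n$ internal nodes (its spine) by keeping the left-most leaf and turning every other leaf $\ell$ into a pointer to a vertex of $T$ which is an internal node or the left-most leaf and which precedes $\ell$ in postorder; two relaxed trees are equal iff they have the same spine and the same pointer targets. A horizontally decorated path is a lattice path starting at $(0,0)$ with steps $H=(1,0)$ and $V=(0,1)$ confined to the region $0\le y\le x$, in which each $H$ step is decorated by a number in $\{1,\dots,k+1\}$, where $k$ is the $y$-coordinate of that step. It is a horizontally decorated Dyck path (of length $2n$) if it ends at $(n,n)$; $\mathcal{D}_n$ denotes the set of these. *)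

From mathcomp Require Import all_boot.
Set Implicit Arguments. Unset Strict Implicit. Unset Printing Implicit Defensive.

Inductive btree : Type := Leaf | Node of btree & btree.

Fixpoint bsize (t : btree) : nat :=
  match t with Leaf => 0 | Node l r => (bsize l + bsize r).+1 end.

(* Vertices are addressed by their path from the root (false = left child,
   true = right child). *)
Definition pos := seq bool.

Fixpoint postorder (t : btree) : seq pos :=
  match t with
  | Leaf => [:: [::]]
  | Node l r => map (cons false) (postorder l) ++ map (cons true) (postorder r) ++ [:: [::]]
  end.

Fixpoint leaves (t : btree) : seq pos :=
  match t with
  | Leaf => [:: [::]]
  | Node l r => map (cons false) (leaves l) ++ map (cons true) (leaves r)
  end.

Fixpoint internals (t : btree) : seq pos :=
  match t with
  | Leaf => [::]
  | Node l r => map (cons false) (internals l) ++ map (cons true) (internals r) ++ [:: [::]]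
  end.

Definition leftmost_leaf (t : btree) : pos := head [::] (leaves t).

Definition admissible_target (t : btree) (l v : pos) : bool :=
  [&& v \in postorder t,
      (v \in internals t) || (v == leftmost_leaf t)
    & index v (postorder t) < index l (postorder t)].

(* A relaxed binary tree: its spine, and the list of pointer targets of the
   non-left-most leaves (listed in postorder of the leaves). *)
Record relaxed := Relaxed { spine : btree; targets : seq pos }.

Definition is_relaxed (n : nat) (r : relaxed) : bool :=
  (bsize (spine r) == n) &&
  all2 (admissible_target (spine r)) (behead (leaves (spine r))) (targets r).

Definition RelaxedTree (n : nat) := {r : relaxed | is_relaxed n r}.

(* Horizontally decorated paths: H d is a horizontal step decorated by d. *)
Inductive step : Type := H of nat | V.

Fixpoint hd_ok (n x y : nat) (s : seq step) : bool :=
  match s with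
  | [::] => (x == n) && (y == n)
  | H d :: s' => (0 < d <= y.+1) && hd_ok n x.+1 y s'
  | V :: s' => (y.+1 <= x) && hd_ok n x y.+1 s'
  end.

Definition is_hdDyck (n : nat) (s : seq step) : bool := hd_ok n 0 0 s.

Definition HDDyck (n : nat) := {s : seq step | is_hdDyck n s}.

From mathcomp Require Import all_boot zify.
Set Implicit Arguments. Unset Strict Implicit. Unset Printing Implicit Defensive.

(* Read a spine in postorder, writing [true] for a leaf and [false] for an
   internal node.  The word starts with the left-most leaf; dropping that letter
   and reading [true] as H and [false] as V gives a Dyck path, since every
   prefix of a postorder word has more leaves than internal nodes, and the word
   determines the tree (it is decoded with a stack).  A leaf read at height y
   has exactly y + 1 admissible pointer targets, the left-most leaf and the y
   internal nodes before it, so its pointer is recorded as its rank in the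
   postorder list of these targets. *)

Definition bounded (ds cs : seq nat) : bool := all2 (fun d c => 0 < d <= c) ds cs.

Section Choices.
Variables (T : eqType) (x0 : T).

Definition encode (As : seq (seq T)) (xs : seq T) : seq nat :=
  [seq (index p.2 p.1).+1 | p <- zip As xs].

Definition decode (As : seq (seq T)) (ds : seq nat) : seq T :=
  [seq nth x0 p.1 p.2.-1 | p <- zip As ds].

Lemma size_encode As xs :
  all2 (fun A x => x \in A) As xs -> size (encode As xs) = size As.
Proof. by rewrite all2E => /andP[/eqP eq_size _]; rewrite size_map size_zip eq_size minnn. Qed.

Lemma bounded_encode As xs :
  all2 (fun A x => x \in A) As xs -> bounded (encode As xs) (map size As).
Proof.
elim: As xs => [|A As IH] [|x xs] //= /andP[xA /IH].
by rewrite /bounded /= index_mem xA.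
Qed.

Lemma decode_in As ds :
  bounded ds (map size As) -> all2 (fun A x => x \in A) As (decode As ds).
Proof.
elim: As ds => [|A As IH] [|d ds] //= /andP[/andP[d_gt0 d_le] /IH ->].
by rewrite mem_nth // prednK.
Qed.

Lemma encodeK As xs :
  all2 (fun A x => x \in A) As xs -> decode As (encode As xs) = xs.
Proof.
elim: As xs => [|A As IH] [|x xs] //= /andP[xA /IH eq_xs].
by rewrite /decode /encode /= nth_index //; congr (_ :: _).
Qed.

Lemma decodeK As ds :
  all uniq As -> bounded ds (map size As) -> encode As (decode As ds) = ds.
Proof.
elim: As ds => [|A As IH] [|d ds] //= /andP[uA uAs] /andP[/andP[d_gt0 d_le] bds].
rewrite /encode /decode /= index_uniq ?prednK //; congr (_ :: _); exact: IH.
Qed.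

End Choices.

Fixpoint dec_bounds (c : nat) (w : seq bool) : seq nat :=
  match w with
  | [::] => [::]
  | true :: w' => c :: dec_bounds c w'
  | false :: w' => dec_bounds c.+1 w'
  end.

Lemma size_dec_bounds c w : size (dec_bounds c w) = count id w.
Proof. by elim: w c => [|[] w IH] c //=; rewrite IH. Qed.

Lemma map_mem_mask (T : eqType) (s : seq T) m :
  uniq s -> size m = size s -> [seq x \in mask m s | x <- s] = m.
Proof.
elim: s m => [|x s IH] [|b m] //= /andP[xNs us] [size_m].
have xNm : x \notin mask m s by apply: contra xNs; apply: mem_mask.
case: b => /=; last by rewrite (negbTE xNm) IH.
rewrite inE eqxx -[in RHS](IH m us size_m); congr (_ :: _).
apply/eq_in_map => y ys; rewrite inE (_ : (y == x) = false) //.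
by apply: contraNF xNs => /eqP <-.
Qed.

Lemma count_prefix_mask (T : eqType) (Q : pred T) c s w :
  uniq s -> map Q s = map negb w ->
  [seq c + count Q (take (index x s) s) | x <- mask w s] = dec_bounds c w.
Proof.
elim: s w c => [|x s IH] [|b w] c //= /andP[xNs us] [Qx Qs].
have shift : {in mask w s, forall y,
  c + count Q (take (index y (x :: s)) (x :: s)) = c + ~~ b + count Q (take (index y s) s)}.
  move=> y /mem_mask ys; have /negbTE xy : x != y by apply: contraNneq xNs => ->.
  by rewrite /= xy /= Qx addnA.
case: b Qx shift => Qx /eq_in_map shift /=.
- by rewrite eqxx take0 addn0 shift IH // addn0.
- by rewrite shift IH // addn1.
Qed.

(* [x] leaves and [y] internal nodes have been read, so the parsing stack holds
   [x - y] trees; an internal node pops two of them. *)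
Fixpoint code_ok (n x y : nat) (w : seq bool) : bool :=
  match w with
  | [::] => (x == n.+1) && (y == n)
  | true :: w' => code_ok n x.+1 y w'
  | false :: w' => (y.+2 <= x) && code_ok n x y.+1 w'
  end.

Definition is_H (s : step) : bool := if s is H _ then true else false.

Definition skeleton (s : seq step) : seq bool := map is_H s.

Fixpoint decorations (s : seq step) : seq nat :=
  match s with
  | [::] => [::]
  | H d :: s' => d :: decorations s'
  | V :: s' => decorations s'
  end.

Fixpoint decorate (w : seq bool) (ds : seq nat) : seq step :=
  match w with
  | [::] => [::]
  | true :: w' => H (head 0 ds) :: decorate w' (behead ds)
  | false :: w' => V :: decorate w' ds
  end.

Lemma decorateK s : decorate (skeleton s) (decorations s) = s.
Proof. by elim: s => [|[d|] s IH] //=; rewrite IH. Qed.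

Lemma skeleton_decorate w ds : skeleton (decorate w ds) = w.
Proof. by elim: w ds => [|[] w IH] ds //=; rewrite IH. Qed.

Lemma size_decorations s : size (decorations s) = count id (skeleton s).
Proof. by elim: s => [|[d|] s IH] //=; rewrite IH. Qed.

Lemma decorations_decorate w ds :
  size ds = count id w -> decorations (decorate w ds) = ds.
Proof.
elim: w ds => [|[] w IH] [|d ds] //=; rewrite ?add0n => size_ds; rewrite IH //.
by case: size_ds.
Qed.

Lemma hd_ok_decorate n x y w ds : size ds = count id w ->
  hd_ok n x y (decorate w ds) = code_ok n x.+1 y w && bounded ds (dec_bounds y.+1 w).
Proof.
elim: w x y ds => [|[] w IH] x y [|d ds] //= size_ds.
- by rewrite eqSS andbT.
- by rewrite IH; [rewrite /bounded /= andbCA | case: size_ds].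
- by rewrite IH // andbA.
- by rewrite IH // andbA.
Qed.

Lemma is_hdDyckE n s : is_hdDyck n s =
  code_ok n 0 0 (true :: skeleton s) && bounded (decorations s) (dec_bounds 1 (skeleton s)).
Proof. by rewrite /is_hdDyck -{1}(decorateK s) hd_ok_decorate ?size_decorations. Qed.

Fixpoint postcode (t : btree) : seq bool :=
  match t with Leaf => [:: true] | Node l r => postcode l ++ postcode r ++ [:: false] end.

Lemma postcodeE t : postcode t = true :: behead (postcode t).
Proof. by elim: t => //= l -> r _. Qed.

Lemma size_postcode t : size (postcode t) = size (postorder t).
Proof. by elim: t => //= l IHl r IHr; rewrite !size_cat !size_map IHl IHr. Qed.

Lemma leaves_mask t : leaves t = mask (postcode t) (postorder t).
Proof.
elim: t => //= l IHl r IHr.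
by rewrite !mask_cat ?size_map ?size_postcode // cats0 -!map_mask IHl IHr.
Qed.

Lemma internals_mask t : internals t = mask (map negb (postcode t)) (postorder t).
Proof.
elim: t => //= l IHl r IHr.
by rewrite !map_cat !mask_cat ?size_map ?size_postcode // -!map_mask IHl IHr.
Qed.

Lemma uniq_postorder t : uniq (postorder t).
Proof.
elim: t => //= l IHl r IHr.
rewrite !cat_uniq !map_inj_uniq ?IHl ?IHr //=; try by move=> u v [].
rewrite andbT orbF; apply/andP; split; last by apply/mapP => -[].
by apply/hasPn => v; rewrite mem_cat inE => /orP[/mapP[u _ ->]|/eqP->]; apply/mapP => -[].
Qed.

Lemma code_ok_postcode_cat n x y t w : y <= x ->
  code_ok n x y (postcode t ++ w) = code_ok n (x + (bsize t).+1) (y + bsize t) w.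
Proof.
elim: t x y w => [|l IHl r IHr] x y w le_yx /=; first by rewrite addn1 addn0.
rewrite -!catA IHl // IHr; last lia.
rewrite cat1s /=; have -> : (y + bsize l + bsize r).+2 <= x + (bsize l).+1 + (bsize r).+1 by lia.
by congr code_ok; lia.
Qed.

Lemma code_ok_postcode n t : code_ok n 0 0 (postcode t) = (bsize t == n).
Proof. by rewrite -[postcode t]cats0 code_ok_postcode_cat //= eqSS andbb. Qed.

Fixpoint parse (st : seq btree) (w : seq bool) : seq btree :=
  match w with
  | [::] => st
  | true :: w' => parse (Leaf :: st) w'
  | false :: w' => if st is r :: l :: st' then parse (Node l r :: st') w' else [::]
  end.

Fixpoint stack_code (st : seq btree) : seq bool :=
  if st is t :: st' then stack_code st' ++ postcode t else [::].

Lemma parse_postcode_cat st t w : parse st (postcode t ++ w) = parse (t :: st) w.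
Proof. by elim: t st w => [|l IHl r IHr] st w //=; rewrite -!catA IHl IHr. Qed.

Lemma parse_code_ok n w st x y : code_ok n x y w -> size st + y = x ->
  stack_code (parse st w) = stack_code st ++ w /\ size (parse st w) = 1.
Proof.
elim: w st x y => [|[] w IH] st x y /=.
- by move=> /andP[/eqP -> /eqP ->] size_st; rewrite cats0; split => //; lia.
- move=> ok_w size_st; have size_st' : size (Leaf :: st) + y = x.+1 by rewrite /=; lia.
  by have [-> ->] := IH _ _ _ ok_w size_st'; rewrite -catA.
- case/andP=> lt_yx ok_w; case: st => [|r [|l st]] /= size_st; try lia.
  have size_st' : size (Node l r :: st) + y.+1 = x by rewrite /=; lia.
  by have [-> ->] := IH _ _ _ ok_w size_st'; rewrite /= -!catA.
Qed.

Definition tree_of_code (w : seq bool) : btree := head Leaf (parse [::] w).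

Lemma tree_of_postcode t : tree_of_code (postcode t) = t.
Proof. by rewrite /tree_of_code -[postcode t]cats0 parse_postcode_cat. Qed.

Lemma postcode_tree_of_code n w : code_ok n 0 0 w -> postcode (tree_of_code w) = w.
Proof.
move=> ok_w; have [] := parse_code_ok (st := [::]) ok_w (erefl 0).
by rewrite /tree_of_code; case: parse => [|t [|]] //= -> _.
Qed.

Definition allowed_targets (t : btree) (l : pos) : seq pos :=
  [seq v <- take (index l (postorder t)) (postorder t)
     | (v \in internals t) || (v == leftmost_leaf t)].

Lemma mem_allowed_targets t l v : (v \in allowed_targets t l) = admissible_target t l v.
Proof.
rewrite mem_filter /admissible_target.
have [vt | vNt] := boolP (v \in postorder t); first by rewrite in_take // andbC.
suff -> : v \in take (index l (postorder t)) (postorder t) = false by rewrite andbF.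
by apply: contraNF vNt; apply: mem_take.
Qed.

Definition choice_lists (t : btree) : seq (seq pos) :=
  map (allowed_targets t) (behead (leaves t)).

Lemma uniq_choice_lists t : all uniq (choice_lists t).
Proof.
by apply/allP => _ /mapP[l _ ->]; apply/filter_uniq/take_uniq/uniq_postorder.
Qed.

Lemma is_relaxedE n r : is_relaxed n r =
  (bsize (spine r) == n) && all2 (fun A x => x \in A) (choice_lists (spine r)) (targets r).
Proof.
congr andb; rewrite /choice_lists.
by elim: (behead _) (targets r) => [|l L IH] [|x xs] //=; rewrite mem_allowed_targets IH.
Qed.

Lemma size_choice_lists t : map size (choice_lists t) = dec_bounds 1 (behead (postcode t)).
Proof.
set Q := fun u => (u \in internals t) || (u == leftmost_leaf t).
set w := behead (postcode t); have def_c : postcode t = true :: w := postcodeE t.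
have [v [s def_p]] : exists v s, postorder t = v :: s.
  by case: (postorder t) (size_postcode t) => [|v s]; rewrite def_c // => _; exists v, s.
have size_w : size w = size s by have := size_postcode t; rewrite def_c def_p => -[].
have := uniq_postorder t; rewrite def_p => /andP[vNs us].
have def_leaves : leaves t = v :: mask w s by rewrite leaves_mask def_c def_p.
have def_lm : leftmost_leaf t = v by rewrite /leftmost_leaf def_leaves.
have Qs : map Q s = map negb w.
  have def_int : internals t = mask (map negb w) s by rewrite internals_mask def_c def_p.
  rewrite -[RHS](map_mem_mask us) ?size_map //; apply/eq_in_map => u su.
  by rewrite /Q def_int def_lm orbC (_ : u == v = false) //; apply: contraNF vNs => /eqP <-.
rewrite /choice_lists def_leaves /= -map_comp -(count_prefix_mask 1 us Qs).
apply/eq_in_map => l /mem_mask sl /=.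
rewrite /allowed_targets size_filter def_p /= (_ : v == l = false) /=.
  by have -> : (v \in internals t) || (v == leftmost_leaf t) by rewrite def_lm eqxx orbT.
by apply: contraNF vNs => /eqP ->.
Qed.

Lemma size_encode_choice_lists t ts :
  all2 (fun A x => x \in A) (choice_lists t) ts ->
  size (encode (choice_lists t) ts) = count id (behead (postcode t)).
Proof. by move/size_encode->; rewrite -(size_map size) size_choice_lists size_dec_bounds. Qed.

Definition path_of_relaxed (r : relaxed) : seq step :=
  decorate (behead (postcode (spine r))) (encode (choice_lists (spine r)) (targets r)).

Definition relaxed_of_path (s : seq step) : relaxed :=
  let t := tree_of_code (true :: skeleton s) in
  Relaxed t (decode [::] (choice_lists t) (decorations s)).

Lemma is_hdDyck_path_of_relaxed n r : is_relaxed n r -> is_hdDyck n (path_of_relaxed r).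
Proof.
case: r => t ts; rewrite is_relaxedE /= => /andP[size_t ts_ok].
rewrite is_hdDyckE skeleton_decorate -postcodeE code_ok_postcode size_t /=.
rewrite decorations_decorate ?size_encode_choice_lists // -size_choice_lists.
exact: bounded_encode.
Qed.

Lemma is_relaxed_relaxed_of_path n s : is_hdDyck n s -> is_relaxed n (relaxed_of_path s).
Proof.
rewrite is_hdDyckE => /andP[ok_s bounded_s]; have code_t := postcode_tree_of_code ok_s.
rewrite is_relaxedE /= -code_ok_postcode code_t ok_s /=.
by apply: decode_in; rewrite size_choice_lists code_t.
Qed.

Lemma relaxed_of_pathK n r : is_relaxed n r -> relaxed_of_path (path_of_relaxed r) = r.
Proof.
case: r => t ts; rewrite is_relaxedE /= => /andP[_ ts_ok].
rewrite /relaxed_of_path /path_of_relaxed /= skeleton_decorate -postcodeE tree_of_postcode.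
by rewrite decorations_decorate ?size_encode_choice_lists // encodeK.
Qed.

Lemma path_of_relaxedK n s : is_hdDyck n s -> path_of_relaxed (relaxed_of_path s) = s.
Proof.
rewrite is_hdDyckE => /andP[ok_s bounded_s]; have code_t := postcode_tree_of_code ok_s.
rewrite /path_of_relaxed /relaxed_of_path /= code_t /= decodeK ?uniq_choice_lists ?decorateK //.
by rewrite size_choice_lists code_t.
Qed.

Theorem theorem2p5 (n : nat) :
  exists f : RelaxedTree n -> HDDyck n, bijective f.
Proof.
exists (fun r => exist _ (path_of_relaxed (val r)) (is_hdDyck_path_of_relaxed (valP r))).
exists (fun s => exist _ (relaxed_of_path (val s)) (is_relaxed_relaxed_of_path (valP s))).
- by move=> [r ok_r]; apply: val_inj; exact: relaxed_of_pathK ok_r.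
- by move=> [s ok_s]; apply: val_inj; exact: path_of_relaxedK ok_s.
Qed.
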